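(* Let $X$ be an $n$-dimensional projective space over a field, let $K$ be a $k$-dimensional subspace of $X$ with $-1\le k\le n-3$, let $\mathcal B_{-1}$ be a $(2,1)$-blocking set in $X/K$, and let $H$ be an arbitrary hyperplane of $X$ containing $K$. Then the disjoint union $$\mathcal B=\{T\in\mathrm{Gr}_1(X):\langle K,T\rangle\in\mathcal B_{-1}\}\ \cup\ \{T\in\mathrm{Gr}_1(H): K\cap T\neq\emptyset\}$$ is a $(2,1)$-blocking set in $X$.
   Context: Projective dimension is used (the empty subspace has dimension $-1$); $\mathrm{Gr}_d(Y)$ is the set of $d$-dimensional subspaces of $Y$. For a $k$-dimensional subspace $K$ of $X$, the quotient space $X/K$ is the projective space of dimension $\dim X-k-1$ whose $r$-dimensional subspaces are the $(r+k+1)$-dimensional subspaces of $X$ containing $K$; the span $\langle K,T\rangle$ is regarded as a subspace of $X/K$. A $(2,1)$-blocking set in a projective space $Y$ is a set of lines of $Y$ such that every plane of $Y$ contains at least one of them (in $X/K$: a set of $(k+2)$-subspaces of $X$ containing $K$ such that every $(k+3)$-subspace of $X$ containing $K$ contains one of them). *)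

From mathcomp Require Import all_boot all_algebra.
Set Implicit Arguments. Unset Strict Implicit. Unset Printing Implicit Defensive.
Import GRing.Theory.
Local Open Scope ring_scope.

(* The n-dimensional projective space X = PG(n, F) is modelled by the vector
   space 'rV[F]_(n.+1); a projective subspace of projective dimension d is a
   vector subspace of vector dimension d+1 (the empty subspace is 0%VS, of
   projective dimension -1). *)
Notation PSub F n := {vspace 'rV[F]_n.+1}.

Definition blocking21 (F : fieldType) (n : nat) (B : PSub F n -> Prop) : Prop :=
  (forall T, B T -> \dim T = 2%N) /\
  (forall P : PSub F n, \dim P = 3%N -> exists T, B T /\ (T <= P)%VS).

(* (2,1)-blocking set in the quotient X/K: a set of (k+2)-subspaces of X
   containing K (vector dim = dim K + 2) such that every (k+3)-subspace of X
   containing K (vector dim = dim K + 3) contains one of them. *)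
Definition quot_blocking21 (F : fieldType) (n : nat) (K : PSub F n)
    (B : PSub F n -> Prop) : Prop :=
  (forall T, B T -> (K <= T)%VS /\ \dim T = (\dim K + 2)%N) /\
  (forall P : PSub F n, (K <= P)%VS -> \dim P = (\dim K + 3)%N ->
     exists T, B T /\ (T <= P)%VS).

Definition prop313_set (F : fieldType) (n : nat) (K H : PSub F n)
    (B1 : PSub F n -> Prop) (T : PSub F n) : Prop :=
  (\dim T = 2%N /\ B1 (K + T)%VS) \/
  (\dim T = 2%N /\ (T <= H)%VS /\ (K :&: T)%VS <> 0%VS).

From mathcomp Require Import all_boot all_algebra.
From mathcomp Require Import zify.
Set Implicit Arguments. Unset Strict Implicit. Unset Printing Implicit Defensive.
Import GRing.Theory.
Local Open Scope ring_scope.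

(* Let P be a plane of X.  If P meets K, the plane P meets the hyperplane H at
   least in a line, and a line of P through a point of K inside H lies in the
   second part of B.  If P is disjoint from K, then <K, P> is a (k+3)-space
   through K, so it contains some T in B_{-1}; by the modular law
   T = <K, T :&: P>, and T :&: P is a line of P in the first part of B.
   The two parts are disjoint because a line T with <K, T> of dimension k+2
   is skew to K. *)

Section SubspaceLattice.

Variables (F : fieldType) (vT : vectType F).
Implicit Types (U V W : {vspace vT}) (v : vT).

Lemma capv0_dimv_sum U V :
  \dim (U + V) = (\dim U + \dim V)%N -> (U :&: V = 0)%VS.
Proof.
by move=> dUV; apply/eqP; rewrite -subv0 -(dimv_add_leqif U V).2 dUV.
Qed.

Lemma addv_capv_modular U V W :
  (U <= W)%VS -> (W <= U + V)%VS -> (U + W :&: V = W)%VS.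
Proof.
move=> sUW sWUV; apply/eqP; rewrite eqEsubv subv_add sUW capvSl /=.
apply/subvP=> w Ww; have /memv_addP[u Uu [v Vv def_w]] := subvP sWUV w Ww.
have def_v : v = w - u by rewrite def_w addrAC subrr add0r.
rewrite def_w memv_add // memv_cap Vv andbT def_v memvB //.
exact: subvP sUW u Uu.
Qed.

Lemma dimv_capv_modular U V W :
  (U :&: V = 0)%VS -> (U <= W)%VS -> (W <= U + V)%VS ->
  \dim (W :&: V) = (\dim W - \dim U)%N.
Proof.
move=> UV0 sUW sWUV; rewrite -{2}(addv_capv_modular sUW sWUV).
rewrite dimv_disjoint_sum ?addKn //.
by apply/eqP; rewrite -subv0 -UV0 capvS // capvSr.
Qed.

Lemma dimv_cap_ge U V : (\dim U + \dim V <= \dim (U :&: V) + \dim {:vT})%N.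
Proof. by rewrite -dimv_sum_cap addnC leq_add2l dimvS ?subvf. Qed.

Lemma exists_line_through U v :
  (2 <= \dim U)%N -> v != 0 -> v \in U ->
  exists2 T : {vspace vT}, \dim T = 2%N & v \in T /\ (T <= U)%VS.
Proof.
move=> dimU v0 Uv; set w := vpick (U :\: <[v]>)%VS.
have w0 : w != 0.
  rewrite vpick0 -dimv_eq0 -lt0n -(ltn_add2l (\dim (U :&: <[v]>))).
  rewrite addn0 dimv_cap_compl (leq_ltn_trans (dimvS (capvSr U <[v]>))) //.
  by rewrite dim_vline v0.
have Uw : w \in U by apply: subvP (diffvSl U <[v]>) w (memv_pick _).
have vw0 : (<[v]> :&: <[w]> = 0)%VS.
  apply/eqP; rewrite -subv0 -(capv_diff U <[v]>) capvC capvS //.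
  by rewrite -memvE memv_pick.
exists (<[v]> + <[w]>)%VS.
  by rewrite dimv_disjoint_sum // !dim_vline v0 w0.
by rewrite memvE addvSl subv_add -!memvE Uv Uw.
Qed.

End SubspaceLattice.

Lemma dimv_rV_full (F : fieldType) (n : nat) :
  \dim (fullv : PSub F n) = n.+1.
Proof. by rewrite dimvf /dim /= mul1n. Qed.

Theorem proposition3p13 (F : fieldType) (n : nat) (K H : PSub F n)
    (B1 : PSub F n -> Prop) :
  (\dim K + 2 <= n)%N ->
  quot_blocking21 K B1 ->
  \dim H = n -> (K <= H)%VS ->
  (forall T, ~ ((\dim T = 2%N /\ B1 (K + T)%VS) /\
                (\dim T = 2%N /\ (T <= H)%VS /\ (K :&: T)%VS <> 0%VS))) /\
  blocking21 (prop313_set K H B1).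
Proof.
move=> _ [B1_dim B1_block] dimH sKH; split.
  move=> T [[dimT /B1_dim[_ dimKT]] [_ [_]]]; apply.
  by apply: capv0_dimv_sum; rewrite dimKT dimT.
split=> [T [[]|[]] // | P dimP].
have [KP0 | KP_neq0] := eqVneq (K :&: P)%VS 0%VS.
- have dimKP : \dim (K + P) = (\dim K + 3)%N by rewrite dimv_disjoint_sum ?dimP.
  have [T [B1T sTKP]] := B1_block _ (addvSl K P) dimKP.
  have [sKT dimT] := B1_dim T B1T.
  exists (T :&: P)%VS; split; last exact: capvSr.
  left; rewrite addv_capv_modular // (dimv_capv_modular KP0 sKT sTKP) dimT.
  by rewrite addKn.
- have /memv_capP[Kv Pv] := memv_pick (K :&: P)%VS.
  set v := vpick _ in Kv Pv; have v0 : v != 0 by rewrite vpick0 KP_neq0.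
  have dimPH : (2 <= \dim (P :&: H))%N.
    by have := dimv_cap_ge P H; rewrite dimP dimH dimv_rV_full; lia.
  have PHv : v \in (P :&: H)%VS by rewrite memv_cap Pv (subvP sKH).
  have [T dimT [Tv sTPH]] := exists_line_through dimPH v0 PHv.
  exists T; split; last exact: subv_trans sTPH (capvSl _ _).
  right; do 2!split=> //; first exact: subv_trans sTPH (capvSr _ _).
  by move=> KT0; move: v0; rewrite -memv0 -KT0 memv_cap Kv Tv.
Qed.
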